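(* Let $G \le \mathrm{Sym}(\mathbb{N})$ be a countable cofinitary group and let $H$ be a countable group. Then there exist permutations $\vec f = \langle f_n : n \in \mathbb{N}\rangle$ in $\mathrm{Sym}(\mathbb{N})$ such that the subgroup generated by $\{f_n : n\in\mathbb{N}\}$ is isomorphic to $H$ and the subgroup $\langle G, \vec f\,\rangle$ generated by $G \cup \{f_n : n\in\mathbb{N}\}$ is cofinitary.
   Context: $\mathrm{Sym}(\mathbb{N})$ is the group of bijections $\mathbb{N}\to\mathbb{N}$ under composition. A permutation is cofinitary if it is the identity or has only finitely many fixed points; a subgroup of $\mathrm{Sym}(\mathbb{N})$ is cofinitary if all its elements are cofinitary. *)

Set Implicit Arguments.

Definition is_perm (f : nat -> nat) : Prop :=
  exists g : nat -> nat, (forall n, g (f n) = n) /\ (forall n, f (g n) = n).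

Definition compose (f g : nat -> nat) : nat -> nat := fun n => f (g n).

Definition cofinitary_perm (f : nat -> nat) : Prop :=
  (forall n, f n = n) \/ (exists N, forall n, f n = n -> n < N).

Definition is_subgroup_Sym (G : (nat -> nat) -> Prop) : Prop :=
  (forall f, G f -> is_perm f) /\
  G (fun n => n) /\
  (forall f g, G f -> G g -> G (compose f g)) /\
  (forall f g, G f -> (forall n, g (f n) = n) -> (forall n, f (g n) = n) -> G g).

Definition cofinitary_group (G : (nat -> nat) -> Prop) : Prop :=
  forall f, G f -> cofinitary_perm f.

Definition countable_set (G : (nat -> nat) -> Prop) : Prop :=
  exists e : nat -> (nat -> nat), forall f, G f -> exists k, e k = f.

Inductive gen (S : (nat -> nat) -> Prop) : (nat -> nat) -> Prop :=
| gen_base : forall f, S f -> gen S f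
| gen_id : gen S (fun n => n)
| gen_comp : forall f g, gen S f -> gen S g -> gen S (compose f g)
| gen_inv : forall f g, gen S f -> (forall n, g (f n) = n) ->
    (forall n, f (g n) = n) -> gen S g.

Record group_on (T : Type) := GroupOn {
  gmul : T -> T -> T;
  gone : T;
  ginv : T -> T;
  gmulA : forall x y z, gmul x (gmul y z) = gmul (gmul x y) z;
  gmul1 : forall x, gmul gone x = x;
  gmulV : forall x, gmul (ginv x) x = gone
}.

Definition countable_type (T : Type) : Prop :=
  exists e : nat -> T, forall x, exists k, e k = x.

Definition iso_to_perm_group (T : Type) (H : group_on T)
  (K : (nat -> nat) -> Prop) : Prop :=
  exists phi : T -> (nat -> nat),
    (forall x y, phi (gmul H x y) = compose (phi x) (phi y)) /\
    (forall x y, phi x = phi y -> x = y) /\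
    (forall x, K (phi x)) /\
    (forall f, K f -> exists x, phi x = f).

(* H acts freely by left multiplication on the positions T x N (copies of its
   regular representation).  We build, in countably many stages, a bijection
   between positions and N; transporting the action along it gives an embedding
   rho : H -> Sym(N) whose nontrivial elements are fixed-point free.  Even
   stages make sure every number gets a position (opening a fresh copy of H),
   odd stages give every position a number chosen in general position with
   respect to the first elements of G.  Every point therefore carries a birth
   stage, and it is either the first point of its H-orbit, or generic.

   Elements of <G, rho(H)> are evaluations of words (h1,g1)...(hm,gm).  Up to
   cyclic rotation (a conjugation) and merging of trivial letters, either the
   word lies in G or rho(H), or it is reduced: all h_i <> 1 and all g_i <> id.
   For a reduced word, a point of maximal birth on the closed walk of a fixed
   point would be younger than one of its neighbours, unless its birth is
   below the indices of the g_i; so the fixed points are among finitely many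
   points born early, and the group is cofinitary. *)

From Stdlib Require Import Arith Lia List ClassicalEpsilon Classical
  FunctionalExtensionality Cantor.
Import ListNotations.

Definition listmax (l : list nat) : nat := fold_right Nat.max 0 l.

Lemma In_le_listmax x l : In x l -> x <= listmax l.
Proof.
  induction l as [|a l IH]; simpl; intros Hx; [contradiction|].
  destruct Hx as [<-|Hx]; [lia|]. specialize (IH Hx); lia.
Qed.

Lemma list_argmax (t : nat -> nat) (S : list nat) x : In x S ->
  exists z, In z S /\ forall y, In y S -> t y <= t z.
Proof.
  revert x; induction S as [|a S IH]; intros x Hx; [contradiction|].
  destruct S as [|b S'].
  - exists a. split; [left; reflexivity|]. intros y [<-|[]]; lia.
  - destruct (IH b (or_introl eq_refl)) as [z [Hz Hmax]].
    destruct (le_lt_dec (t a) (t z)).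
    + exists z. split; [right; exact Hz|]. intros y [<-|Hy]; auto.
    + exists a. split; [left; reflexivity|]. intros y [<-|Hy]; [lia|].
      specialize (Hmax y Hy); lia.
Qed.

Lemma bounded_by_escape (t : nat -> nat) (E1 E2 : nat -> nat -> Prop) K
  (S : list nat) :
  (forall v, In v S ->
     (exists w, In w S /\ E1 v w) /\ (exists w, In w S /\ E2 v w)) ->
  (forall v, K < t v ->
     (forall w, E1 v w -> t v < t w) \/ (forall w, E2 v w -> t v < t w)) ->
  forall x, In x S -> t x <= K.
Proof.
  intros Hnb Hesc x Hx.
  destruct (list_argmax t S x Hx) as [z [Hz Hmax]].
  enough (t z <= K) by (specialize (Hmax x Hx); lia).
  apply Nat.nlt_ge; intro Hbig.
  destruct (Hnb z Hz) as [[w1 [Hw1 E1w]] [w2 [Hw2 E2w]]].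
  destruct (Hesc z Hbig) as [Esc|Esc].
  - specialize (Esc w1 E1w); specialize (Hmax w1 Hw1); lia.
  - specialize (Esc w2 E2w); specialize (Hmax w2 Hw2); lia.
Qed.

Lemma cofinitary_ext f f' :
  (forall n, f n = f' n) -> cofinitary_perm f -> cofinitary_perm f'.
Proof.
  intros E [Hid|[N HN]]; [left|right].
  - intro n; rewrite <- E; auto.
  - exists N. intros n Hn. apply HN. rewrite E; auto.
Qed.

(* Cofinitariness is invariant under conjugation by a permutation a:
   the fixed points of a u a^-1 are the images under a of those of u. *)
Lemma cofinitary_conj a ainv u f :
  (forall n, ainv (a n) = n) -> (forall n, a (ainv n) = n) ->
  (forall n, f (a n) = a (u n)) -> cofinitary_perm u -> cofinitary_perm f.
Proof.
  intros Ha1 Ha2 Hf [Hid|[N HN]].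
  - left. intro x. rewrite <- (Ha2 x), Hf, Hid. reflexivity.
  - right. exists (S (listmax (map a (seq 0 N)))). intros x Hx.
    rewrite <- (Ha2 x), Hf in Hx. apply (f_equal ainv) in Hx.
    rewrite !Ha1 in Hx. apply HN in Hx.
    assert (Hin : In (a (ainv x)) (map a (seq 0 N)))
      by (apply in_map, in_seq; lia).
    apply In_le_listmax in Hin. rewrite Ha2 in Hin. lia.
Qed.

Definition nontrivial (g : nat -> nat) : Prop := exists n, g n <> n.

Lemma subgroup_enumeration (G : (nat -> nat) -> Prop) :
  is_subgroup_Sym G -> countable_set G ->
  exists e : nat -> (nat -> nat),
    (forall k, G (e k)) /\ (forall f, G f -> exists k, e k = f).
Proof.
  intros HG [e He].
  exists (fun k => if excluded_middle_informative (G (e k)) then e k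
                   else fun n => n).
  split.
  - intro k. destruct excluded_middle_informative; [assumption|apply HG].
  - intros f Hf. destruct (He f Hf) as [k Hk]. exists k.
    destruct excluded_middle_informative; [assumption|subst; contradiction].
Qed.

Section Construction.

Variable G : (nat -> nat) -> Prop.
Hypothesis HG : is_subgroup_Sym G.
Hypothesis Hcof : cofinitary_group G.
Variable eG : nat -> (nat -> nat).
Hypothesis eG_in : forall k, G (eG k).
Hypothesis eG_onto : forall f, G f -> exists k, eG k = f.
Variable T : Type.
Variable H : group_on T.
Variable eH : nat -> T.
Hypothesis eH_onto : forall x, exists k, eH k = x.

Notation mul := (gmul H).
Notation one := (gone H).
Notation inv := (ginv H).

(* The axioms of group_on only give left identity and left inverses. *)
Lemma mulrV x : mul x (inv x) = one.
Proof.
  rewrite <- (gmul1 H (mul x (inv x))), <- (gmulV H (inv x)) at 1.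
  rewrite <- gmulA, (gmulA H (inv x) x (inv x)), gmulV, gmul1.
  apply gmulV.
Qed.

Lemma mulr1 x : mul x one = x.
Proof. rewrite <- (gmulV H x), gmulA, mulrV, gmul1. reflexivity. Qed.

Lemma inv_neq_one h : h <> one -> inv h <> one.
Proof. intros Hh E. apply Hh. rewrite <- (gmulV H h), E, gmul1. reflexivity. Qed.

Lemma G_id : G (fun n => n).
Proof. apply HG. Qed.

Lemma G_comp f g : G f -> G g -> G (fun n => f (g n)).
Proof. apply HG. Qed.

Lemma G_inv g : G g -> exists gi, G gi /\
  (forall n, gi (g n) = n) /\ (forall n, g (gi n) = n).
Proof.
  intro Hg. destruct (proj1 HG g Hg) as [gi [Hgi1 Hgi2]].
  exists gi. split; [apply (proj2 (proj2 (proj2 HG)) g gi)|]; auto.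
Qed.

Definition Good (s : nat) (used : list nat) (y : nat) : Prop :=
  ~ In y used /\
  forall k, k < s -> nontrivial (eG k) ->
    eG k y <> y /\ ~ In (eG k y) used /\ (forall z, In z used -> eG k z <> y).

(* All sufficiently large values are good: each nontrivial g in G has only
   finitely many fixed points and maps the finitely many used values to, and
   from, finitely many values. *)
Lemma good_eventually s used : exists B, forall y, B <= y -> Good s used y.
Proof.
  induction s as [|s [B HB]].
  - exists (S (listmax used)). intros y Hy. split; [|intros; lia].
    intro Hin. apply In_le_listmax in Hin. lia.
  - destruct (classic (nontrivial (eG s))) as [[n0 Hn0]|Htriv].
    + destruct (Hcof _ (eG_in s)) as [Hid|[N HN]]; [contradiction (Hn0 (Hid n0))|].
      destruct (G_inv _ (eG_in s)) as [gi [_ [Hgi _]]].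
      exists (max B (max N (max (S (listmax (map (eG s) used)))
                                (S (listmax (map gi used)))))).
      intros y Hy. destruct (HB y ltac:(lia)) as [Hfresh Hold].
      split; [exact Hfresh|]. intros k Hk Hnt.
      destruct (Nat.eq_dec k s) as [->|Hne]; [|apply Hold; auto; lia].
      split; [|split].
      * intro Hfix. apply HN in Hfix. lia.
      * intro Hin. apply (in_map gi), In_le_listmax in Hin. rewrite Hgi in Hin. lia.
      * intros z Hz Heq. apply (in_map (eG s)), In_le_listmax in Hz.
        rewrite Heq in Hz. lia.
    + exists B. intros y Hy. destruct (HB y Hy) as [Hfresh Hold].
      split; [exact Hfresh|]. intros k Hk Hnt.
      destruct (Nat.eq_dec k s) as [->|Hne]; [contradiction|apply Hold; auto; lia].
Qed.

Definition choose_good (s : nat) (used : list nat) : nat :=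
  proj1_sig (constructive_indefinite_description _
    (let (B, HB) := good_eventually s used in ex_intro _ B (HB B (le_n B)))).

Lemma choose_good_spec s used : Good s used (choose_good s used).
Proof. unfold choose_good. apply proj2_sig. Qed.

(* Positions are pairs (a, i): the element a of H in the i-th copy of its
   regular representation.  A table is a finite list of position/value pairs. *)
Definition entry := ((T * nat) * nat)%type.

Definition position (j : nat) : T * nat :=
  let '(k, i) := Cantor.of_nat j in (eH k, i).

Definition fresh_copy (L : list entry) : nat := S (listmax (map snd (map fst L))).

Definition cover_value (m : nat) (L : list entry) : list entry :=
  if excluded_middle_informative (In m (map snd L)) then L
  else L ++ [((one, fresh_copy L), m)].

Definition cover_position (s j : nat) (L : list entry) : list entry :=
  if excluded_middle_informative (In (position j) (map fst L)) then L
  else L ++ [(position j, choose_good s (map snd L))].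

Definition step (s : nat) (L : list entry) : list entry :=
  if Nat.even s then cover_value (Nat.div2 s) L
  else cover_position s (Nat.div2 s) L.

Fixpoint table (n : nat) : list entry :=
  match n with 0 => [] | S n => step n (table n) end.

Definition new_copy (L : list entry) (p : T * nat) : Prop :=
  forall q, In q (map fst L) -> snd q <> snd p.

Lemma step_spec s L : step s L = L \/ exists e, step s L = L ++ [e] /\
  ~ In (fst e) (map fst L) /\ ~ In (snd e) (map snd L) /\
  (new_copy L (fst e) \/ Good s (map snd L) (snd e)).
Proof.
  unfold step. destruct (Nat.even s).
  - unfold cover_value.
    destruct excluded_middle_informative as [Hi|Hi]; [left; reflexivity|right].
    eexists; split; [reflexivity|]. simpl.
    assert (Hnew : new_copy L (one, fresh_copy L)).
    { intros q Hq Heq. apply (in_map snd), In_le_listmax in Hq.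
      simpl in Heq. unfold fresh_copy in Heq. lia. }
    split; [|split; auto].
    intro Hin. apply (Hnew _ Hin). reflexivity.
  - unfold cover_position.
    destruct excluded_middle_informative as [Hi|Hi]; [left; reflexivity|right].
    eexists; split; [reflexivity|]. simpl.
    pose proof (choose_good_spec s (map snd L)) as Hg.
    split; [auto|split; [apply Hg|right; exact Hg]].
Qed.

Definition partial_bijection (L : list entry) : Prop :=
  forall p1 y1 p2 y2, In (p1, y1) L -> In (p2, y2) L -> (p1 = p2 <-> y1 = y2).

Lemma partial_bijection_snoc L e : partial_bijection L ->
  ~ In (fst e) (map fst L) -> ~ In (snd e) (map snd L) ->
  partial_bijection (L ++ [e]).
Proof.
  destruct e as [p y]; simpl. intros HL Hp Hy p1 y1 p2 y2 H1 H2.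
  apply in_app_iff in H1; apply in_app_iff in H2; simpl in *.
  destruct H1 as [H1|[H1|[]]]; destruct H2 as [H2|[H2|[]]].
  - eauto.
  - injection H2 as -> ->. apply (in_map fst) in H1 as Hf.
    apply (in_map snd) in H1 as Hs. simpl in *.
    split; intro; subst; contradiction.
  - injection H1 as -> ->. apply (in_map fst) in H2 as Hf.
    apply (in_map snd) in H2 as Hs. simpl in *.
    split; intro; subst; contradiction.
  - injection H1 as -> ->; injection H2 as -> ->. tauto.
Qed.

Lemma table_bijective n : partial_bijection (table n).
Proof.
  induction n as [|n IH]; simpl.
  - intros p1 y1 p2 y2 [].
  - destruct (step_spec n (table n)) as [->|[e [-> [H1 [H2 _]]]]]; auto.
    apply partial_bijection_snoc; auto.
Qed.

Lemma table_mono n m e : n <= m -> In e (table n) -> In e (table m).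
Proof.
  induction 1 as [|m _ IH]; auto. intro He. simpl.
  destruct (step_spec m (table m)) as [->|[e' [-> _]]]; auto.
  apply in_app_iff; auto.
Qed.

Lemma value_covered m : In m (map snd (table (S (2 * m)))).
Proof.
  change (table (S (2 * m))) with (step (2 * m) (table (2 * m))).
  unfold step. rewrite Nat.even_even, Nat.div2_double. unfold cover_value.
  destruct excluded_middle_informative; auto.
  rewrite map_app. apply in_app_iff. simpl; auto.
Qed.

Lemma position_covered j : In (position j) (map fst (table (S (2 * j + 1)))).
Proof.
  change (table (S (2 * j + 1))) with (step (2 * j + 1) (table (2 * j + 1))).
  unfold step. rewrite Nat.even_odd, Nat.div2_odd'. unfold cover_position.
  destruct excluded_middle_informative; auto.
  rewrite map_app. apply in_app_iff. simpl; auto.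
Qed.

Definition assoc (p : T * nat) (y : nat) : Prop := exists n, In (p, y) (table n).

Lemma assoc_bijective p1 y1 p2 y2 :
  assoc p1 y1 -> assoc p2 y2 -> (p1 = p2 <-> y1 = y2).
Proof.
  intros [n1 H1] [n2 H2]. apply (table_bijective (max n1 n2)).
  - apply (table_mono n1); auto; lia.
  - apply (table_mono n2); auto; lia.
Qed.

Lemma assoc_value y : exists p, assoc p y.
Proof.
  destruct (proj1 (in_map_iff _ _ _) (value_covered y)) as [[p z] [Hz Hin]].
  simpl in Hz; subst. exists p, (S (2 * y)); exact Hin.
Qed.

Lemma assoc_position p : exists y, assoc p y.
Proof.
  destruct p as [a i]. destruct (eH_onto a) as [k Hk].
  pose proof (position_covered (Cantor.to_nat (k, i))) as Hc.
  unfold position in Hc. rewrite Cantor.cancel_of_to, Hk in Hc.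
  destruct (proj1 (in_map_iff _ _ _) Hc) as [[p z] [Hz Hin]].
  simpl in Hz; subst. exists z, (S (2 * Cantor.to_nat (k, i) + 1)); exact Hin.
Qed.

Definition pos (y : nat) : T * nat :=
  proj1_sig (constructive_indefinite_description _ (assoc_value y)).
Definition val (p : T * nat) : nat :=
  proj1_sig (constructive_indefinite_description _ (assoc_position p)).

Lemma pos_spec y : assoc (pos y) y.
Proof. unfold pos. apply proj2_sig. Qed.
Lemma val_spec p : assoc p (val p).
Proof. unfold val. apply proj2_sig. Qed.
Lemma val_pos y : val (pos y) = y.
Proof. apply (assoc_bijective _ _ _ _ (val_spec (pos y)) (pos_spec y)). auto. Qed.
Lemma pos_val p : pos (val p) = p.
Proof. apply (assoc_bijective _ _ _ _ (pos_spec (val p)) (val_spec p)). auto. Qed.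
Lemma pos_of_table p y n : In (p, y) (table n) -> pos y = p.
Proof.
  intro Hin. apply (assoc_bijective _ _ _ _ (pos_spec y) (ex_intro _ n Hin)). auto.
Qed.

Definition rho (h : T) (x : nat) : nat := val (mul h (fst (pos x)), snd (pos x)).

Lemma pos_rho h x : pos (rho h x) = (mul h (fst (pos x)), snd (pos x)).
Proof. apply pos_val. Qed.

Lemma rho_mul a b x : rho (mul a b) x = rho a (rho b x).
Proof. unfold rho at 2. rewrite pos_rho. simpl. rewrite gmulA. reflexivity. Qed.

Lemma rho_one x : rho one x = x.
Proof. unfold rho. rewrite gmul1, <- surjective_pairing. apply val_pos. Qed.

Lemma rho_invl h x : rho (inv h) (rho h x) = x.
Proof. rewrite <- rho_mul, gmulV. apply rho_one. Qed.

Lemma rho_invr h x : rho h (rho (inv h) x) = x.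
Proof. rewrite <- rho_mul, mulrV. apply rho_one. Qed.

Lemma rho_fix h x : rho h x = x -> h = one.
Proof.
  intro E. apply (f_equal pos) in E. rewrite pos_rho in E.
  destruct (pos x) as [a i]. simpl in E. injection E as E.
  rewrite <- (mulr1 h), <- (mulrV a), gmulA, E. reflexivity.
Qed.

Lemma rho_inj a b : rho a = rho b -> a = b.
Proof.
  intro E. apply (f_equal (fun f => pos (f (val (one, 0))))) in E.
  rewrite !pos_rho, pos_val in E. simpl in E. injection E as E.
  rewrite !mulr1 in E. exact E.
Qed.

Lemma first_transition (P : nat -> Prop) n : ~ P 0 -> P n ->
  exists s, ~ P s /\ P (S s).
Proof.
  intros H0 Hn. induction n as [|n IH]; [contradiction|].
  destruct (classic (P n)) as [Hp|Hp]; eauto.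
Qed.

Lemma ex_birth y : exists s, ~ In y (map snd (table s)) /\ In y (map snd (table (S s))).
Proof.
  apply (first_transition (fun s => In y (map snd (table s))) (S (2 * y))).
  - simpl; auto.
  - apply value_covered.
Qed.

Definition birth (y : nat) : nat :=
  proj1_sig (constructive_indefinite_description _ (ex_birth y)).

Lemma birth_entry y : table (S (birth y)) = table (birth y) ++ [(pos y, y)] /\
  (new_copy (table (birth y)) (pos y) \/ Good (birth y) (map snd (table (birth y))) y).
Proof.
  pose proof (proj2_sig (constructive_indefinite_description _ (ex_birth y)))
    as [Hout Hin].
  fold (birth y) in Hout, Hin. simpl in Hin |- *.
  destruct (step_spec (birth y) (table (birth y))) as [E|[[p z] [E [_ [_ Hok]]]]];
    rewrite E in Hin |- *; [contradiction|].
  rewrite map_app, in_app_iff in Hin. simpl in Hin.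
  destruct Hin as [Hin|[->|[]]]; [contradiction|].
  assert (Hp : pos y = p).
  { apply (pos_of_table _ _ (S (birth y))). simpl. rewrite E.
    apply in_app_iff; simpl; auto. }
  subst p. auto.
Qed.

Lemma birth_in y : In (pos y, y) (table (S (birth y))).
Proof. rewrite (proj1 (birth_entry y)). apply in_app_iff; simpl; auto. Qed.

Lemma born_before u w : birth u <= birth w -> u <> w -> In (pos u, u) (table (birth w)).
Proof.
  intros Hle Hne. destruct (Nat.eq_dec (birth u) (birth w)) as [E|E].
  - pose proof (birth_in u) as Hu. rewrite E, (proj1 (birth_entry w)) in Hu.
    apply in_app_iff in Hu. destruct Hu as [Hu|[Hu|[]]]; auto.
    injection Hu as _ ->. contradiction.
  - apply (table_mono (S (birth u))); [lia|apply birth_in].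
Qed.

Definition opens_copy (y : nat) : Prop := new_copy (table (birth y)) (pos y).
Definition generic (y : nat) : Prop := Good (birth y) (map snd (table (birth y))) y.

Lemma opens_copy_or_generic y : opens_copy y \/ generic y.
Proof. apply birth_entry. Qed.

Lemma opens_copy_escape h v : h <> one -> opens_copy v -> birth v < birth (rho h v).
Proof.
  intros Hh Hnew. apply Nat.nle_gt. intro Hle.
  assert (Hne : rho h v <> v) by (intro E; apply Hh; apply (rho_fix h v); auto).
  pose proof (born_before _ _ Hle Hne) as Hin. apply (in_map fst) in Hin.
  apply (Hnew _ Hin). rewrite pos_rho. reflexivity.
Qed.

Lemma generic_escape_fwd k v : nontrivial (eG k) -> k < birth v -> generic v ->
  birth v < birth (eG k v).
Proof.
  intros Hnt Hk [_ Hgood]. destruct (Hgood k Hk Hnt) as [Hfix [Hout _]].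
  apply Nat.nle_gt. intro Hle.
  pose proof (born_before _ _ Hle Hfix) as Hin. apply (in_map snd) in Hin.
  contradiction.
Qed.

Lemma generic_escape_bwd k u v : nontrivial (eG k) -> k < birth v -> generic v ->
  eG k u = v -> birth v < birth u.
Proof.
  intros Hnt Hk [_ Hgood] E. destruct (Hgood k Hk Hnt) as [Hfix [_ Hback]].
  apply Nat.nle_gt. intro Hle.
  assert (Hne : u <> v) by (intro Euv; subst u; exact (Hfix E)).
  pose proof (born_before _ _ Hle Hne) as Hin. apply (in_map snd) in Hin.
  exact (Hback u Hin E).
Qed.

Definition Hedge (u v : nat) : Prop :=
  exists h, h <> one /\ (v = rho h u \/ u = rho h v).
Definition Gedge (K : nat) (u v : nat) : Prop :=
  exists k, k <= K /\ nontrivial (eG k) /\ (v = eG k u \/ u = eG k v).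

Lemma escape K v : K < birth v ->
  (forall w, Hedge v w -> birth v < birth w) \/
  (forall w, Gedge K v w -> birth v < birth w).
Proof.
  intro HK. destruct (opens_copy_or_generic v) as [Hnew|Hgen]; [left|right].
  - intros w [h [Hh [->|E]]]; [apply opens_copy_escape; auto|].
    replace w with (rho (inv h) v) by (rewrite E; apply rho_invl).
    apply opens_copy_escape; auto. apply inv_neq_one; exact Hh.
  - intros w [k [Hk [Hnt [->|E]]]].
    + apply generic_escape_fwd; auto; lia.
    + apply (generic_escape_bwd k); auto; lia.
Qed.

Definition word := list (T * (nat -> nat)).

Fixpoint evalW (P : word) (n : nat) : nat :=
  match P with
  | [] => n
  | (h, g) :: P' => rho h (g (evalW P' n))
  end.

Definition validW (P : word) : Prop := forall h g, In (h, g) P -> G g.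

Lemma evalW_app P Q n : evalW (P ++ Q) n = evalW P (evalW Q n).
Proof. induction P as [|[h g] P IH]; simpl; [reflexivity|]. rewrite IH; reflexivity. Qed.

Lemma validW_nil : validW [].
Proof. intros ? ? []. Qed.

Lemma validW_cons h g P : validW ((h, g) :: P) <-> G g /\ validW P.
Proof.
  split.
  - intro V. split; [apply (V h); left; reflexivity|].
    intros h' g' Hin. apply (V h'). right. exact Hin.
  - intros [Hg V] h' g' [E|Hin]; [injection E as _ <-; exact Hg|exact (V h' g' Hin)].
Qed.

Lemma validW_app P Q : validW (P ++ Q) <-> validW P /\ validW Q.
Proof.
  split.
  - intro V. split; intros h g Hin; apply (V h); apply in_app_iff; auto.
  - intros [VP VQ] h g Hin. apply in_app_iff in Hin. destruct Hin; eauto.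
Qed.

Definition reducedW (K : nat) (P : word) : Prop :=
  forall h g, In (h, g) P ->
    h <> one /\ exists k, k <= K /\ nontrivial (eG k) /\ g = eG k.

Fixpoint path_points (P : word) (x : nat) : list nat :=
  match P with
  | [] => [x]
  | (h, g) :: P' => rho h (g (evalW P' x)) :: g (evalW P' x) :: path_points P' x
  end.

Lemma path_points_ends P x : In (evalW P x) (path_points P x) /\ In x (path_points P x).
Proof.
  induction P as [|[h g] P IH]; simpl; [auto|]. destruct IH; auto.
Qed.

Definition has_neighbours (K : nat) (S : list nat) (v : nat) : Prop :=
  (exists w, In w S /\ Hedge v w) /\ (exists w, In w S /\ Gedge K v w).

Lemma has_neighbours_incl K S S' v : incl S S' -> has_neighbours K S v ->
  has_neighbours K S' v.
Proof.
  intros Hincl [[w1 [Hw1 E1]] [w2 [Hw2 E2]]].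
  split; [exists w1|exists w2]; auto.
Qed.

Lemma path_neighbours K P x : reducedW K P -> P <> [] ->
  (exists w, In w (path_points P x) /\ Hedge (evalW P x) w) /\
  (exists w, In w (path_points P x) /\ Gedge K x w) /\
  (forall v, In v (path_points P x) -> v <> evalW P x -> v <> x ->
     has_neighbours K (path_points P x) v).
Proof.
  induction P as [|[h g] P IH]; intros R Hne; [congruence|].
  destruct (R h g (or_introl eq_refl)) as [Hh [k [Hk [Hnt ->]]]].
  assert (R' : reducedW K P) by (intros h' g' Hin; apply R; right; exact Hin).
  set (y := evalW P x). simpl; fold y.
  assert (Hincl : incl (path_points P x) (rho h (eG k y) :: eG k y :: path_points P x))
    by (intros ? ?; simpl; auto).
  assert (Hy : In y (path_points P x)) by apply path_points_ends.
  assert (EH : Hedge (eG k y) (rho h (eG k y))) by (exists h; auto).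
  assert (EHr : Hedge (rho h (eG k y)) (eG k y)) by (exists h; auto).
  assert (EG : Gedge K y (eG k y)) by (exists k; auto).
  assert (EGr : Gedge K (eG k y) y) by (exists k; auto).
  destruct P as [|p P'].
  -
    split; [exists (eG k y); simpl; auto|split; [exists (eG k y); simpl; auto|]].
    intros v Hv Hs Hx. simpl in Hv. destruct Hv as [<-|[<-|[<-|[]]]];
      [congruence| |congruence].
    split; [exists (rho h (eG k y))|exists y]; simpl; auto.
  - destruct (IH R' ltac:(discriminate)) as [[w [Hw Ew]] [[w' [Hw' Ew']] Hinner]].
    fold y in Ew, Hinner.
    split; [exists (eG k y); simpl; auto|split; [exists w'; auto|]].
    intros v Hv Hs Hx. destruct Hv as [<-|[<-|Hv]]; [congruence| |].
    + split; [exists (rho h (eG k y))|exists y]; simpl; auto.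
    + destruct (classic (v = y)) as [->|Hvy].
      * split; [exists w|exists (eG k y)]; simpl; auto.
      * apply (has_neighbours_incl _ _ _ _ Hincl), Hinner; auto.
Qed.

(* For a fixed point x of a reduced word the walk is closed, so every point
   of it has neighbours of both kinds; hence x was born by stage K. *)
Lemma reduced_fixed_point_born_early K P x : reducedW K P -> P <> [] ->
  evalW P x = x -> birth x <= K.
Proof.
  intros R Hne Hfix.
  destruct (path_neighbours K P x R Hne) as [Hstart [Hend Hinner]].
  rewrite Hfix in Hstart.
  apply (bounded_by_escape birth Hedge (Gedge K) K (path_points P x)).
  - intros v Hv. destruct (classic (v = x)) as [->|Hvx]; [split; assumption|].
    apply Hinner; congruence.
  - apply escape.
  - apply path_points_ends.
Qed.

Lemma reduced_cofinitary K P : reducedW K P -> P <> [] -> cofinitary_perm (evalW P).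
Proof.
  intros R Hne. right. exists (S (listmax (map snd (table (S K))))).
  intros x Hfix. pose proof (reduced_fixed_point_born_early K P x R Hne Hfix) as Hb.
  assert (Hin : In (pos x, x) (table (S K)))
    by (apply (table_mono (S (birth x))); [lia|apply birth_in]).
  apply (in_map snd) in Hin. apply In_le_listmax in Hin. cbn [snd] in Hin. lia.
Qed.

Lemma evalW_invertible P : validW P -> exists Q, validW Q /\
  (forall n, evalW Q (evalW P n) = n) /\ (forall n, evalW P (evalW Q n) = n).
Proof.
  induction P as [|[h g] P IH]; intro V.
  - exists []. split; [exact validW_nil|simpl; auto].
  - apply validW_cons in V as [Hg V].
    destruct (IH V) as [Q [VQ [HQl HQr]]].
    destruct (G_inv g Hg) as [gi [Hgi [Hgil Hgir]]].
    exists (Q ++ [(one, gi); (inv h, fun n => n)]). split; [|split].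
    + rewrite validW_app, !validW_cons. auto using validW_nil, G_id.
    + intro n. rewrite evalW_app. simpl. rewrite rho_one, rho_invl, Hgil. apply HQl.
    + intro n. rewrite evalW_app. simpl. rewrite HQr, rho_one, Hgir. apply rho_invr.
Qed.

Lemma reduced_bound P : validW P ->
  (forall h g, In (h, g) P -> h <> one /\ nontrivial g) -> exists K, reducedW K P.
Proof.
  induction P as [|[h0 g0] P IH]; intros V Hnt.
  - exists 0. intros h g [].
  - apply validW_cons in V as [Hg0 V].
    destruct IH as [K HK]; [exact V|intros h g Hin; apply Hnt; right; exact Hin|].
    destruct (eG_onto g0 Hg0) as [k0 Hk0].
    exists (max K k0). intros h g [E|Hin].
    + injection E as -> ->. destruct (Hnt h g (or_introl eq_refl)) as [Hh Hg].
      split; [exact Hh|]. exists k0. subst g. split; [lia|auto].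
    + destruct (HK h g Hin) as [Hh [k [Hk Hrest]]].
      split; [exact Hh|]. exists k. split; [lia|exact Hrest].
Qed.

(* Rotating a word conjugates its evaluation, so preserves cofinitariness. *)
Lemma cofinitary_rotate A x B : validW (A ++ x :: B) ->
  cofinitary_perm (evalW (x :: B ++ A)) -> cofinitary_perm (evalW (A ++ x :: B)).
Proof.
  intro V. apply validW_app in V as [VA _].
  destruct (evalW_invertible A VA) as [Q [_ [HQl HQr]]].
  apply (cofinitary_conj (evalW A) (evalW Q)); auto.
  intro n. rewrite !evalW_app, app_comm_cons, evalW_app. reflexivity.
Qed.

Lemma validW_rotate A h g B : validW (A ++ (h, g) :: B) -> validW ((h, g) :: B ++ A).
Proof. rewrite validW_cons, !validW_app, validW_cons. tauto. Qed.

Lemma rho_cofinitary h : cofinitary_perm (rho h).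
Proof.
  destruct (classic (h = one)) as [->|Hh]; [left; exact rho_one|].
  right. exists 0. intros n Hn. contradiction (Hh (rho_fix h n Hn)).
Qed.

Lemma merge_trivial_H h g g' P m :
  evalW ((h, g) :: (one, g') :: P) m = evalW ((h, fun x => g (g' x)) :: P) m.
Proof. simpl. rewrite rho_one. reflexivity. Qed.

Lemma merge_trivial_G h g h' g' P m : (forall x, g x = x) ->
  evalW ((h, g) :: (h', g') :: P) m = evalW ((mul h h', g') :: P) m.
Proof. intro Hg. simpl. rewrite Hg, rho_mul. reflexivity. Qed.

Section Reduction.

Variable n : nat.
Hypothesis IH : forall Q, length Q <= n -> validW Q -> cofinitary_perm (evalW Q).

Lemma trivial_H_letter g C : length C <= n -> validW ((one, g) :: C) ->
  cofinitary_perm (evalW ((one, g) :: C)).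
Proof.
  intros Hlen V. destruct C as [|c C0].
  - apply (cofinitary_ext g); [intro m; simpl; rewrite rho_one; reflexivity|].
    apply Hcof. exact (proj1 (proj1 (validW_cons _ _ _) V)).
  - destruct (exists_last (l := c :: C0) ltac:(discriminate)) as [C [[h' g'] EC]].
    rewrite EC in Hlen, V |- *. rewrite app_comm_cons in V |- *.
    apply cofinitary_rotate; [exact V|].
    apply validW_rotate in V. simpl in V.
    rewrite validW_cons, validW_cons in V.
    apply (cofinitary_ext (evalW ((h', fun m => g' (g m)) :: C))).
    { intro m. symmetry. apply (merge_trivial_H h' g' g C m). }
    apply IH.
    + rewrite length_app in Hlen. simpl in *. lia.
    + apply validW_cons. split; [apply G_comp|]; tauto.
Qed.

Lemma trivial_G_letter h g C : length C <= n -> validW ((h, g) :: C) ->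
  (forall x, g x = x) -> cofinitary_perm (evalW ((h, g) :: C)).
Proof.
  intros Hlen V Hg. destruct C as [|[h' g'] C].
  - apply (cofinitary_ext (rho h)); [intro m; simpl; rewrite Hg; reflexivity|].
    apply rho_cofinitary.
  - apply (cofinitary_ext (evalW ((mul h h', g') :: C))).
    { intro m. symmetry. apply merge_trivial_G, Hg. }
    apply IH; [simpl in *; lia|].
    rewrite !validW_cons in *. tauto.
Qed.

End Reduction.

(* Every word over G and H evaluates to a cofinitary permutation: a trivial
   letter is rotated to the front and merged away, otherwise the word is
   reduced. *)
Lemma evalW_cofinitary n : forall P, length P <= n -> validW P ->
  cofinitary_perm (evalW P).
Proof.
  induction n as [|n IH]; intros P Hlen V.
  { destruct P; [left; reflexivity|simpl in Hlen; lia]. }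
  destruct (classic (exists g, In (one, g) P)) as [[g Hin]|Hnone].
  { destruct (in_split _ _ Hin) as [A [B ->]].
    apply cofinitary_rotate; [exact V|].
    apply (trivial_H_letter n IH); [|apply validW_rotate, V].
    rewrite length_app in *; simpl in Hlen; lia. }
  destruct (classic (exists h g, In (h, g) P /\ forall x, g x = x))
    as [[h [g [Hin Hg]]]|Hnoid].
  { destruct (in_split _ _ Hin) as [A [B ->]].
    apply cofinitary_rotate; [exact V|].
    apply (trivial_G_letter n IH); [|apply validW_rotate, V|exact Hg].
    rewrite length_app in *; simpl in Hlen; lia. }
  destruct P as [|p P']; [left; reflexivity|].
  destruct (reduced_bound (p :: P')) as [K HK]; [exact V| |].
  - intros h g Hin. split.
    + intros ->. apply Hnone. exists g; exact Hin.
    + apply NNPP. intro Htriv. apply Hnoid. exists h, g. split; [exact Hin|].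
      intro x. apply NNPP. intro Hx. apply Htriv. exists x; exact Hx.
  - apply (reduced_cofinitary K); [exact HK|discriminate].
Qed.

Lemma gen_word f : gen (fun f => G f \/ exists k, rho (eH k) = f) f ->
  exists P, validW P /\ forall n, f n = evalW P n.
Proof.
  induction 1 as [f [Hf|[k <-]] | | f g _ [P [VP EP]] _ [Q [VQ EQ]]
                 | f g _ [P [VP EP]] Hgf Hfg].
  - exists [(one, f)]. split; [apply validW_cons; auto using validW_nil|].
    intro n. simpl. rewrite rho_one. reflexivity.
  - exists [(eH k, fun n => n)]. split; [apply validW_cons; auto using validW_nil, G_id|].
    reflexivity.
  - exists []. split; [exact validW_nil|reflexivity].
  - exists (P ++ Q). split; [apply validW_app; auto|].
    intro n. unfold compose. rewrite evalW_app, EQ, EP. reflexivity.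
  - destruct (evalW_invertible P VP) as [Q [VQ [_ HQr]]]. exists Q. split; [exact VQ|].
    intro n. rewrite <- (Hgf (evalW Q n)), EP, HQr. reflexivity.
Qed.

Theorem generic_realization : exists fs : nat -> (nat -> nat),
    (forall k, is_perm (fs k)) /\
    iso_to_perm_group H (gen (fun f => exists k, fs k = f)) /\
    cofinitary_group (gen (fun f => G f \/ exists k, fs k = f)).
Proof.
  exists (fun k => rho (eH k)). split; [|split].
  - intro k. exists (rho (inv (eH k))). split; intro; [apply rho_invl|apply rho_invr].
  - exists rho. split; [|split; [|split]].
    + intros x y. apply functional_extensionality, rho_mul.
    + exact rho_inj.
    + intro x. apply gen_base. destruct (eH_onto x) as [k <-]. exists k; reflexivity.
    + induction 1 as [f [k <-] | | f g _ [x <-] _ [y <-] | f g _ [x <-] Hgf Hfg].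
      * exists (eH k); reflexivity.
      * exists one. apply functional_extensionality, rho_one.
      * exists (mul x y). apply functional_extensionality, rho_mul.
      * exists (inv x). apply functional_extensionality. intro n.
        rewrite <- (Hgf (rho (inv x) n)), rho_invr. reflexivity.
  - intros f Hf. destruct (gen_word f Hf) as [P [V E]].
    apply (cofinitary_ext (evalW P)); [intro n; symmetry; apply E|].
    apply (evalW_cofinitary (length P)); auto.
Qed.

End Construction.

Theorem mainTheorem11 (G : (nat -> nat) -> Prop)
  (HG : is_subgroup_Sym G) (Hcof : cofinitary_group G) (Hcnt : countable_set G)
  (T : Type) (H : group_on T) (HT : countable_type T) :
  exists fs : nat -> (nat -> nat),
    (forall k, is_perm (fs k)) /\
    iso_to_perm_group H (gen (fun f => exists k, fs k = f)) /\
    cofinitary_group (gen (fun f => G f \/ exists k, fs k = f)).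
Proof.
  destruct (subgroup_enumeration G HG Hcnt) as [eG [eG_in eG_onto]].
  destruct HT as [eH eH_onto].
  exact (generic_realization G HG Hcof eG eG_in eG_onto T H eH eH_onto).
Qed.
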